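(* Let $C$ and $D$ be convex subsets of a real topological vector space $X$. Then $\operatorname{fri} C+\operatorname{fri} D\subseteq\operatorname{fri}(C+D)$, where $+$ denotes Minkowski sum.
   Context: For a convex set $C$, a convex subset $F\subseteq C$ is a face of $C$ if for every $x\in F$ and all $y,z\in C$ with $x\in(y,z)=\{(1-t)y+tz:t\in(0,1)\}$ we have $y,z\in F$; $F_{\min}(x,C)$ is the intersection of all faces of $C$ containing $x\in C$. The face relative interior is $\operatorname{fri} C=\{x\in C: C\subseteq\overline{F_{\min}(x,C)}\}$. *)

From HB Require Import structures.
From mathcomp Require Import all_boot all_order all_algebra.
From mathcomp Require Import all_classical all_reals all_analysis.
Set Implicit Arguments. Unset Strict Implicit. Unset Printing Implicit Defensive.
Import Order.TTheory GRing.Theory Num.Theory.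
Local Open Scope classical_set_scope.
Local Open Scope ring_scope.

Section FaceDefs.
Variables (R : realType) (X : topologicalLmodType R).

Definition open_segment (y z : X) : set X :=
  [set (1 - t) *: y + t *: z | t in `]0, 1[%classic].

Definition is_face (C F : set X) : Prop :=
  [/\ convex_set (F : set (convex_lmodType X)), F `<=` C &
      forall x y z, F x -> C y -> C z -> open_segment y z x -> F y /\ F z].

Definition Fmin (x : X) (C : set X) : set X :=
  \bigcap_(F in [set F | is_face C F /\ F x]) F.

Definition fri (C : set X) : set X :=
  [set x | C x /\ C `<=` closure (Fmin x C)].

Definition minkowski_sum (C D : set X) : set X :=
  [set c + d | c in C & d in D].

End FaceDefs.

From HB Require Import structures.
From mathcomp Require Import all_boot all_order all_algebra.
From mathcomp Require Import all_classical all_reals all_analysis.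
Import Order.TTheory GRing.Theory Num.Theory.
Local Open Scope classical_set_scope.
Local Open Scope ring_scope.

(* If x is in fri C and y in fri D, every face F of C + D through x + y pulls
   back, by translation, to a face of C through x and to a face of D through y;
   hence F_min(x, C) + F_min(y, D) lies in F_min(x + y, C + D).  Continuity of
   addition then gives C + D in cl F_min(x, C) + cl F_min(y, D), which lies in
   cl (F_min(x, C) + F_min(y, D)), which lies in cl F_min(x + y, C + D). *)

Section FaceRelativeInteriorSum.
Context {R : realType} {X : topologicalLmodType R}.
Implicit Types (C D F S A B : set X) (c d : X).

Lemma minkowski_sumC A B : minkowski_sum A B = minkowski_sum B A.
Proof.
by apply/seteqP; split=> _ [a Aa [b Bb <-]]; exists b => //; exists a;
  rewrite // addrC.
Qed.

Lemma minkowski_sumS {A A' B B'} :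
  A `<=` A' -> B `<=` B' -> minkowski_sum A B `<=` minkowski_sum A' B'.
Proof.
move=> AA' BB' _ [a Aa [b Bb <-]].
by exists a; [exact: AA'|exists b => //; exact: BB'].
Qed.

Lemma minkowski_sum_closure A B :
  minkowski_sum (closure A) (closure B) `<=` closure (minkowski_sum A B).
Proof.
move=> _ [a clAa [b clBb <-]] N Nab.
have [/= [U V] [Ua Vb] UV_N] := @add_continuous X (a, b) _ Nab.
have [a' [Aa' Ua']] := clAa _ Ua.
have [b' [Bb' Vb']] := clBb _ Vb.
exists (a' + b'); split; first by exists a' => //; exists b'.
exact: (UV_N (a', b')).
Qed.

Lemma is_face_translate {C S F d} :
  convex_set (C : set (convex_lmodType X)) -> is_face S F ->
  (forall c, C c -> S (c + d)) -> is_face C [set c | C c /\ F (c + d)].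
Proof.
move=> cvxC [cvxF FS faceF] CdS; split.
- move=> x y l; rewrite !inE => -[Cx Fx] [Cy Fy]; split.
    by have := cvxC x y l; rewrite !inE; apply.
  have := cvxF (x + d) (y + d) l; rewrite !inE => /(_ Fx Fy).
  congr F; rewrite /conv /= !scalerDr addrACA -scalerDl.
  by rewrite unstable.add_onemK scale1r.
- by move=> x [].
- move=> x y z [Cx Fx] Cy Cz [t t01 xE].
  have [|Fy Fz] := faceF (x + d) (y + d) (z + d) Fx (CdS _ Cy) (CdS _ Cz).
    by exists t => //; rewrite -xE !scalerDr addrACA -scalerDl subrK scale1r.
  by split; split.
Qed.

Lemma Fmin_sub_translate {C D F c d} :
  convex_set (C : set (convex_lmodType X)) -> C c -> D d ->
  is_face (minkowski_sum C D) F -> F (c + d) ->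
  Fmin c C `<=` [set c' | C c' /\ F (c' + d)].
Proof.
move=> cvxC Cc Dd faceF Fcd; apply: bigcap_inf; split=> //.
apply: is_face_translate faceF _ => // x Cx.
by exists x => //; exists d.
Qed.

Lemma Fmin_minkowski_sum {C D c d} :
  convex_set (C : set (convex_lmodType X)) ->
  convex_set (D : set (convex_lmodType X)) -> C c -> D d ->
  minkowski_sum (Fmin c C) (Fmin d D) `<=` Fmin (c + d) (minkowski_sum C D).
Proof.
move=> cvxC cvxD Cc Dd _ [c' Fc' [d' Fd' <-]] F [faceF Fcd].
have [Cc' Fc'd] := Fmin_sub_translate cvxC Cc Dd faceF Fcd _ Fc'.
rewrite minkowski_sumC in faceF; rewrite addrC in Fc'd.
have [_ Fd'c'] := Fmin_sub_translate cvxD Dd Cc' faceF Fc'd _ Fd'.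
by rewrite addrC.
Qed.

End FaceRelativeInteriorSum.

Theorem proposition4p4 (R : realType) (X : topologicalLmodType R)
    (C D : set X) :
  convex_set (C : set (convex_lmodType X)) ->
  convex_set (D : set (convex_lmodType X)) ->
  minkowski_sum (fri C) (fri D) `<=` fri (minkowski_sum C D).
Proof.
move=> cvxC cvxD _ [c [Cc C_clFc] [d [Dd D_clFd] <-]].
split; first by exists c => //; exists d.
apply: subset_trans (minkowski_sumS C_clFc D_clFd) _.
apply: subset_trans (minkowski_sum_closure _ _) _.
move=> x clx; apply: (closureS _ clx).
exact: Fmin_minkowski_sum.
Qed.
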